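(* Let $d\ge 3$ be odd, $n=\frac{d^2+1}{2}$, and consider the $[[d^2+1,2,d]]$ generalized bicycle code defined by $a(x)=1+x$, $b(x)=1+x^d$. If all syndrome extractions are performed using the RL pattern, the effective distance of the code is $d$.
   Context: $R_n=\mathbb{F}_2[x]/\langle x^n-1\rangle$, vectors of $\mathbb{F}_2^{2n}$ are pairs $(u,v)$ of elements of $R_n$ (left half, right half), weight = number of nonzero coefficients. Code spaces: $C_2=\{(c(1+x),c(1+x^d))\}$ (X-stabilizers), $C_1=\{(u,v):u(1+x^d)+v(1+x)=0\}$, $C_2'=\{(c(1+x^{-d}),c(1+x^{-1}))\}$ (Z-stabilizers), $C_1'=\{(u,v):u(1+x^{-1})+v(1+x^{-d})=0\}$, $x^{-1}=x^{n-1}$; undetectable X- (resp. Z-) logical errors are elements of $C_1\setminus C_2$ (resp. $C_1'\setminus C_2'$). Each check $x^i(1+x,1+x^d)$ (left qubits $i,i+1$; right qubits $i,i+d$) and $x^i(1+x^{-d},1+x^{-1})$ is measured with one ancilla via four CNOTs. In the RL pattern the ancilla first interacts with the check's two right-half qubits and then with its two left-half qubits, so a single ancilla fault between the two halves propagates to errors of the check's type on its two left-half qubits, i.e. $(x^i(1+x),0)$ for X-checks and $(x^i(1+x^{-d}),0)$ for Z-checks; any other single ancilla fault is equivalent to at most one data-qubit error. The effective distance is the minimum number of faults producing an undetectable logical error, namely the minimum of $\mathrm{wt}(j)+\mathrm{wt}(u)+\mathrm{wt}(v)$ over $j,u,v\in R_n$ with $(u+j(x)(1+x),v)\in C_1\setminus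 C_2$ or $(u+j(x)(1+x^{-d}),v)\in C_1'\setminus C_2'$. *)

(* R_n = F_2[x]/<x^n - 1> is represented by polynomials in
   {poly 'F_2}; two polynomials denote the same element of R_n iff
   x^n - 1 divides their difference. *)
From HB Require Import structures.
From mathcomp Require Import all_boot all_order all_algebra.
Set Implicit Arguments. Unset Strict Implicit. Unset Printing Implicit Defensive.
Import GRing.Theory.
Local Open Scope ring_scope.

Definition modpoly (n : nat) : {poly 'F_2} := 'X^n - 1.

Definition eqR (n : nat) (p q : {poly 'F_2}) : Prop := dvdp (modpoly n) (p - q).

Definition wt (n : nat) (p : {poly 'F_2}) : nat :=
  count (fun c : 'F_2 => c != 0) (polyseq (p %% modpoly n)).

(* x^{-k} in R_n, i.e. x^{(n-1)k}  (x^{-1} = x^{n-1}) *)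
Definition xneg (n k : nat) : {poly 'F_2} := 'X^(n.-1 * k).

Definition inC1 (n d : nat) (u v : {poly 'F_2}) : Prop :=
  eqR n (u * (1 + 'X^d) + v * (1 + 'X)) 0.
Definition inC2 (n d : nat) (u v : {poly 'F_2}) : Prop :=
  exists c : {poly 'F_2}, eqR n u (c * (1 + 'X)) /\ eqR n v (c * (1 + 'X^d)).
Definition inC1' (n d : nat) (u v : {poly 'F_2}) : Prop :=
  eqR n (u * (1 + xneg n 1) + v * (1 + xneg n d)) 0.
Definition inC2' (n d : nat) (u v : {poly 'F_2}) : Prop :=
  exists c : {poly 'F_2}, eqR n u (c * (1 + xneg n d)) /\ eqR n v (c * (1 + xneg n 1)).

Definition X_logical n d u v : Prop := inC1 n d u v /\ ~ inC2 n d u v.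
Definition Z_logical n d u v : Prop := inC1' n d u v /\ ~ inC2' n d u v.

(* a fault configuration (j = ancilla hook faults, u,v = data errors) under the
   RL pattern producing an undetectable logical error *)
Definition bad_fault (n d : nat) (j u v : {poly 'F_2}) : Prop :=
  X_logical n d (u + j * (1 + 'X)) v \/ Z_logical n d (u + j * (1 + xneg n d)) v.

Definition fault_cost (n : nat) (j u v : {poly 'F_2}) : nat :=
  (wt n j + wt n u + wt n v)%N.

Definition effective_distance_is (n d D : nat) : Prop :=
  (exists j u v, bad_fault n d j u v /\ fault_cost n j u v = D) /\
  (forall j u v, bad_fault n d j u v -> (D <= fault_cost n j u v)%N).

From mathcomp Require Import all_boot all_order all_algebra.
From mathcomp Require Import zify ring.
Set Implicit Arguments. Unset Strict Implicit. Unset Printing Implicit Defensive.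
Import GRing.Theory.
Local Open Scope ring_scope.

(* Write d = 2s+1, so that n = 2s^2+2s+1 is odd and d(s+1) = n + s.
   As n is odd, any W in R_n with (1+x)W = 0 equals W(1)(1 + x + ... + x^(n-1)).
   Hence an element of C_1 (or C_1') whose two halves both have even weight
   lies in C_2 (or C_2'): a logical error (U, V) has U(1) = 1 or V(1) = 1.
   Each (B, A) in C_1 gives a map (U, V) |-> UA + VB from C_1 to the kernel of
   1+x.  With G(y,k) = 1 + y + ... + y^(k-1), both (G(x^d,s+1), G(x,s)) and
   (x^(s+1) G(x^d,s), G(x,s+1)) lie in C_1, and one of them has
   U(1)A(1) + V(1)B(1) = 1, making UA + VB the all-ones word of weight n.
   Substituting U = u + j(1+x), where A(1+x) = 1 + x^k, and using that weight
   is subadditive and submultiplicative gives n <= (s+1)(wt u + wt v + wt j),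
   i.e. a cost of at least d since n > 2s(s+1).  Z-errors (U, V) reduce to
   this through (V, x^(d-1) U), which lies in C_1.  The first pair is itself an
   X-logical error of weight d. *)

Lemma pchar2_F2 : (2 \in [pchar 'F_2])%N.
Proof. exact: pchar_Fp. Qed.

Lemma pchar2_polyF2 : (2 \in [pchar {poly 'F_2}])%N.
Proof. by rewrite pchar_poly pchar2_F2. Qed.

Lemma subF2 (p q : {poly 'F_2}) : p - q = p + q.
Proof. by rewrite (GRing.subr_pchar2 pchar2_polyF2). Qed.

Lemma addF2 (p : {poly 'F_2}) : p + p = 0.
Proof. exact: addrr_pchar2 pchar2_polyF2 p. Qed.

Lemma F2_natr_odd k : (k%:R : 'F_2) = (odd k)%:R.
Proof. by rewrite -Fp_nat_mod // modn2. Qed.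

Lemma F2_cases (x : 'F_2) : x = 0 \/ x = 1.
Proof. by case: x => [[|[|k]] Hk]; [left|right|by []]; apply: val_inj. Qed.

Lemma nz_addr (V : zmodType) (x y : V) :
  (((x + y)%R != 0%R) <= (x != 0%R) + (y != 0%R))%N.
Proof.
have [->|_] := eqVneq x 0; first by rewrite add0r.
exact: leq_trans (leq_b1 _) (leq_addr _ _).
Qed.

Lemma count_nz_coef (R : nzSemiRingType) (p : {poly R}) N : (size p <= N)%N ->
  count (fun c => c != 0) p = (\sum_(i < N) nat_of_bool (p`_i != 0)%R)%N.
Proof.
move=> pN; rewrite -sum1_count big_mkcond /= (big_nth 0) big_mkord.
rewrite (big_ord_widen N (fun i => (p`_i != 0 : nat)) pN) big_mkcond /=.
by apply: eq_bigr => i _; case: ltnP => // /(nth_default 0) ->; rewrite eqxx.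
Qed.

Definition geom (R : pzRingType) (y : R) (k : nat) : R := \sum_(i < k) y ^+ i.

Lemma geom_mul_1D (R : comNzRingType) (y : R) k : (2 \in [pchar R])%N ->
  geom y k * (1 + y) = 1 + y ^+ k.
Proof.
move=> R2; rewrite mulrC addrC -(GRing.subr_pchar2 R2) -subrX1.
by rewrite (GRing.subr_pchar2 R2) addrC.
Qed.

Lemma horner_geom (R : comNzRingType) (y : {poly R}) k x :
  (geom y k).[x] = geom y.[x] k.
Proof. by rewrite horner_sum; apply: eq_bigr => i _; rewrite horner_exp. Qed.

Lemma geom1 (R : pzRingType) k : geom (1 : R) k = k%:R.
Proof. by rewrite /geom; under eq_bigr do rewrite expr1n; rewrite sumr_const card_ord. Qed.

Section Rn.
Variable n : nat.
Local Notation m := (modpoly n).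

Lemma eqR_modpE (p q : {poly 'F_2}) : eqR n p q <-> p %% m = q %% m.
Proof. by rewrite /eqR /dvdp modpD modpN subr_eq0; split=> /eqP. Qed.

Lemma eqR_mull (r p q : {poly 'F_2}) : eqR n p q -> eqR n (r * p) (r * q).
Proof. by rewrite /eqR -mulrBr; apply: dvdp_mull. Qed.

Lemma dvdp_modpoly_Xn i k : m %| 'X^(i + k * n) - 'X^i.
Proof.
rewrite exprD mulnC exprM -[X in _ - X]mulr1 -mulrBr dvdp_mull //.
by rewrite subrX1 dvdp_mulr.
Qed.

Lemma eqR_horner1 (p q : {poly 'F_2}) : eqR n p q -> p.[1] = q.[1].
Proof.
case/dvdpP=> r /(congr1 (horner^~ 1)); rewrite hornerD hornerN hornerM.
rewrite /modpoly hornerD hornerN hornerXn expr1n hornerC subrr mulr0.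
by move/eqP; rewrite subr_eq0 => /eqP.
Qed.

Lemma modpoly_geom : m = geom 'X n * (1 + 'X).
Proof. by rewrite geom_mul_1D ?pchar2_polyF2 // /modpoly subF2 addrC. Qed.

Lemma geom_X_poly : geom 'X n = \poly_(i < n) 1 :> {poly 'F_2}.
Proof. by rewrite poly_def; apply: eq_bigr => i _; rewrite scale1r. Qed.

Lemma kernel_mul_1DX (W : {poly 'F_2}) : odd n ->
  m %| W * (1 + 'X) -> eqR n W (W.[1]%:P * geom 'X n).
Proof.
move=> n_odd; rewrite modpoly_geom dvdp_mul2r; last first.
  by rewrite -size_poly_gt0 addrC -[1]polyC1 size_XaddC.
case/dvdpP=> c ->; rewrite hornerM horner_geom hornerX geom1 F2_natr_odd n_odd mulr1.
have /dvdpP [q Hq] : ('X - 1%:P) %| c - (c.[1])%:P.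
  by rewrite dvdp_XsubCl /root hornerD hornerN hornerC subrr.
rewrite /eqR -mulrBl Hq modpoly_geom -mulrA dvdp_mull //.
by rewrite subF2 addrC polyC1 mulrC.
Qed.

Hypothesis n_gt0 : (0 < n)%N.

Lemma size_modpoly : size m = n.+1.
Proof. by rewrite /modpoly -polyC1 size_XnsubC. Qed.

Lemma size_modp_modpoly (p : {poly 'F_2}) : (size (p %% m)%R <= n)%N.
Proof.
have m_neq0 : m != 0 by rewrite -size_poly_gt0 size_modpoly.
by have := ltn_modp p m; rewrite m_neq0 size_modpoly.
Qed.

Lemma modp_modpoly_small (p : {poly 'F_2}) : (size p <= n)%N -> p %% m = p.
Proof. by move=> pn; rewrite modp_small // size_modpoly. Qed.

Lemma wtE (p : {poly 'F_2}) : wt n p = (\sum_(i < n) nat_of_bool ((p %% m)`_i != 0)%R)%N.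
Proof. exact/count_nz_coef/size_modp_modpoly. Qed.

Lemma wt_eqR (p q : {poly 'F_2}) : eqR n p q -> wt n p = wt n q.
Proof. by rewrite /wt => /eqR_modpE ->. Qed.

Lemma wt0 : wt n 0 = 0%N.
Proof. by rewrite /wt mod0p polyseq0. Qed.

Lemma wtD (p q : {poly 'F_2}) : (wt n (p + q) <= wt n p + wt n q)%N.
Proof. by rewrite !wtE -big_split leq_sum // => i _; rewrite modpD coefD nz_addr. Qed.

Lemma wt_sum (I : Type) (r : seq I) (P : pred I) (F : I -> {poly 'F_2}) :
  (wt n (\sum_(i <- r | P i) F i) <= \sum_(i <- r | P i) wt n (F i))%N.
Proof.
elim/big_rec2: _ => [|i k p _ IH]; first by rewrite wt0.
exact: leq_trans (wtD _ _) (leq_add (leqnn _) IH).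
Qed.

Lemma wt_Xn e : wt n 'X^e = 1%N.
Proof.
rewrite /wt; have /eqR_modpE -> : eqR n 'X^e 'X^(e %% n).
  by rewrite /eqR {1}(divn_eq e n) addnC dvdp_modpoly_Xn.
rewrite modp_modpoly_small ?size_polyXn ?ltn_pmod //.
by rewrite polyseqXn -cats1 count_cat count_nseq eqxx /= mul0n.
Qed.

Lemma wt_monomials (es : seq nat) : (wt n (\sum_(e <- es) 'X^e) <= size es)%N.
Proof.
apply: leq_trans (wt_sum _ _ _) _.
by under eq_bigr do rewrite wt_Xn; rewrite sum1_size.
Qed.

Lemma wt_support (p : {poly 'F_2}) :
  exists2 es : seq nat, size es = wt n p & eqR n p (\sum_(e <- es) 'X^e).
Proof.
have iota_index : iota 0 n = index_iota 0 n by rewrite /index_iota subn0.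
set r := p %% m; exists [seq i <- iota 0 n | r`_i != 0].
  rewrite size_filter wtE -sum1_count big_mkcond iota_index big_mkord.
  by apply: eq_bigr => i _; case: ifP.
apply/eqR_modpE; rewrite -modp_id; congr (_ %% _).
rewrite big_filter big_mkcond /= iota_index big_mkord -/r.
rewrite {1}(_ : r = \poly_(i < n) r`_i); last first.
  apply/polyP => i; rewrite coef_poly; case: ltnP => // ni.
  by rewrite nth_default // (leq_trans (size_modp_modpoly p)).
rewrite poly_def; apply: eq_bigr => i _.
by case: (F2_cases r`_i) => ->; rewrite ?scale0r ?scale1r ?eqxx ?oner_neq0.
Qed.

Lemma wt_XnM e (q : {poly 'F_2}) : (wt n ('X^e * q) <= wt n q)%N.
Proof.
have [fs <- /(eqR_mull ('X^e)) /wt_eqR ->] := wt_support q.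
rewrite big_distrr /= (eq_bigr (fun f => 'X^(e + f))) => [|f _]; last first.
  by rewrite exprD.
rewrite -(big_map (addn e) xpredT (fun x => 'X^x)) -(size_map (addn e)).
exact: wt_monomials.
Qed.

Lemma wtM (p q : {poly 'F_2}) : (wt n (p * q) <= wt n p * wt n q)%N.
Proof.
have [es <- /(eqR_mull q) /wt_eqR] := wt_support p.
rewrite mulrC => ->; rewrite big_distrr /=; apply: leq_trans (wt_sum _ _ _) _.
rewrite -sum1_size big_distrl /=; apply: leq_sum => e _.
by rewrite mul1n mulrC wt_XnM.
Qed.

Lemma wt_geom e k : (wt n (geom ('X^e) k) <= k)%N.
Proof.
apply: leq_trans (wt_sum _ _ _) _.
by under eq_bigr do rewrite -exprM wt_Xn; rewrite sum1_card card_ord.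
Qed.

Lemma wt_geom_X : wt n (geom 'X n) = n.
Proof.
rewrite wtE geom_X_poly modp_modpoly_small ?size_poly //.
by under eq_bigr do rewrite coef_poly ltn_ord oner_neq0; rewrite sum1_card card_ord.
Qed.

Lemma wt_kernel_mul_1DX (W : {poly 'F_2}) : odd n ->
  m %| W * (1 + 'X) -> W.[1] != 0 -> wt n W = n.
Proof.
move=> n_odd HW W1; rewrite (wt_eqR (kernel_mul_1DX n_odd HW)).
have [W10|->] := F2_cases W.[1]; first by rewrite W10 eqxx in W1.
by rewrite mul1r wt_geom_X.
Qed.

Lemma wt_1DXn k : (wt n (1 + 'X^k) <= 2)%N.
Proof. by apply: leq_trans (wtD _ _) _; rewrite -(expr0 'X) !wt_Xn. Qed.

End Rn.

Lemma horner1_1DXn k : (1 + 'X^k : {poly 'F_2}).[1] = 0.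
Proof. by rewrite hornerD hornerC hornerXn expr1n addrr_pchar2 // pchar2_F2. Qed.

Lemma horner1_geom (y : {poly 'F_2}) k : y.[1] = 1 -> (geom y k).[1] = k%:R.
Proof. by move=> y1; rewrite horner_geom y1 geom1. Qed.

Lemma even_kernel_in_image n (a b e U V : {poly 'F_2}) : odd n ->
  eqR n (a * e) (1 + 'X) -> b.[1] = 0 ->
  eqR n (U * b + V * a) 0 -> U.[1] = 0 -> V.[1] = 0 ->
  exists c, eqR n U (c * a) /\ eqR n V (c * b).
Proof.
rewrite /eqR subr0 => n_odd Hae b1 HUV U1 V1.
have /dvdpP [c Uc] : ('X - 1%:P) %| U by rewrite dvdp_XsubCl /root U1.
rewrite polyC1 subF2 addrC in Uc.
have HU : modpoly n %| U + e * c * a.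
  have -> : U + e * c * a = c * (a * e - (1 + 'X)) by rewrite Uc subF2; ring.
  exact: dvdp_mull.
exists (e * c); split; first by rewrite subF2.
set W := V - e * c * b.
have W1 : W.[1] = 0 by rewrite /W hornerD hornerN hornerM b1 mulr0 subr0 V1.
have HW : modpoly n %| W * (1 + 'X).
  have -> : W * (1 + 'X) =
      e * ((U * b + V * a) - b * (U + e * c * a)) - W * (a * e - (1 + 'X)).
    by rewrite /W; ring.
  by rewrite dvdp_sub ?dvdp_mull // dvdp_sub ?dvdp_mull.
by move: (kernel_mul_1DX n_odd HW); rewrite W1 mul0r /eqR subr0.
Qed.

Lemma X_logical_parity n d U V : odd n ->
  X_logical n d U V -> U.[1] != 0 \/ V.[1] != 0.
Proof.
move=> n_odd [HUV notC2].
have [U1|] := eqVneq U.[1] 0; last by left.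
have [V1|] := eqVneq V.[1] 0; last by right.
case: notC2; apply: (even_kernel_in_image (e := 1)) => //.
  by rewrite mulr1 /eqR subrr dvdp0.
exact: horner1_1DXn.
Qed.

Lemma Z_logical_parity n d U V : odd n ->
  Z_logical n d U V -> V.[1] != 0 \/ U.[1] != 0.
Proof.
move=> n_odd [HUV notC2].
have [U1|] := eqVneq U.[1] 0; last by right.
have [V1|] := eqVneq V.[1] 0; last by left.
case: notC2; have Hae : eqR n ((1 + xneg n 1) * 'X) (1 + 'X).
  rewrite /eqR /xneg muln1 mulrDl mul1r -exprSr prednK ?odd_gt0 //.
  by rewrite (_ : _ - _ = modpoly n) ?dvdpp // /modpoly; ring.
have HVU : eqR n (V * (1 + xneg n d) + U * (1 + xneg n 1)) 0 by rewrite addrC.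
have [c [HV HU]] := even_kernel_in_image n_odd Hae (horner1_1DXn _) HVU V1 U1.
by exists c.
Qed.

Lemma inC1_pairing_mul_1DX n d (U V A B : {poly 'F_2}) :
  inC1 n d U V -> inC1 n d B A -> modpoly n %| (U * A + V * B) * (1 + 'X).
Proof.
rewrite /inC1 /eqR !subr0 => HUV HBA.
have -> : (U * A + V * B) * (1 + 'X) =
    U * (B * (1 + 'X^d) + A * (1 + 'X)) + B * (U * (1 + 'X^d) + V * (1 + 'X))
    - (U * B * (1 + 'X^d) + U * B * (1 + 'X^d)) by ring.
by rewrite addF2 subr0 dvdp_add ?dvdp_mull.
Qed.

Lemma wt_X_fault_pairing n d (A B j u v : {poly 'F_2}) : odd n ->
  inC1 n d B A -> inC1 n d (u + j * (1 + 'X)) v ->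
  (u + j * (1 + 'X)).[1] * A.[1] + v.[1] * B.[1] != 0 ->
  wt n (u * A + v * B + j * (A * (1 + 'X))) = n.
Proof.
move=> n_odd HBA HUV W1.
have -> : u * A + v * B + j * (A * (1 + 'X)) = (u + j * (1 + 'X)) * A + v * B.
  by ring.
apply: wt_kernel_mul_1DX (odd_gt0 n_odd) _ n_odd (inC1_pairing_mul_1DX HUV HBA) _.
by rewrite hornerD !hornerM.
Qed.

Lemma inC1_of_inC1' n d (U V : {poly 'F_2}) : (0 < n)%N -> (0 < d)%N ->
  inC1' n d U V -> inC1 n d V ('X^(d.-1) * U).
Proof.
case: n => // n _; case: d => // d _.
rewrite /inC1' /inC1 /eqR /xneg !subr0 /= muln1 => HZ.
have -> : V * (1 + 'X^(d.+1)) + 'X^d * U * (1 + 'X) =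
    'X^(d.+1) * (U * (1 + 'X^n) + V * (1 + 'X^(n * d.+1)))
    - U * ('X^(d.+1) * 'X^n - 'X^d) - V * ('X^(d.+1) * 'X^(n * d.+1) - 1).
  by rewrite exprSr; ring.
rewrite -!exprD -(expr0 'X) (_ : (d.+1 + n = d + 1 * n.+1)%N); last by lia.
rewrite (_ : (d.+1 + n * d.+1 = 0 + d.+1 * n.+1)%N); last by lia.
by rewrite !dvdp_sub ?dvdp_mull ?dvdp_modpoly_Xn.
Qed.

Lemma eqR_Z_hook n d (A B : {poly 'F_2}) : (0 < n)%N -> (0 < d)%N ->
  inC1 n d B A ->
  eqR n ('X^(d.-1) * (1 + xneg n d) * B) ('X^(n.-1) * (A * (1 + 'X))).
Proof.
case: n => // n _; case: d => // d _.
rewrite /inC1 /eqR /xneg subr0 /= => HBA.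
have -> : 'X^d * (1 + 'X^(n * d.+1)) * B - 'X^n * (A * (1 + 'X)) =
    B * (('X^d * 'X^(n * d.+1) - 'X^n) - ('X^n * 'X^(d.+1) - 'X^d))
    + 'X^n * (B * (1 + 'X^(d.+1)) - A * (1 + 'X)).
  by rewrite exprSr; ring.
rewrite -!exprD (_ : (d + n * d.+1 = n + d * n.+1)%N); last by lia.
rewrite (_ : (n + d.+1 = d + 1 * n.+1)%N); last by lia.
apply: dvdp_add; first by rewrite dvdp_mull // dvdp_sub ?dvdp_modpoly_Xn.
by rewrite dvdp_mull // subF2.
Qed.

Lemma wt_Z_fault_pairing n d (A B j u v : {poly 'F_2}) : odd n -> (0 < d)%N ->
  inC1 n d B A -> inC1' n d (u + j * (1 + xneg n d)) v ->
  v.[1] * A.[1] + (u + j * (1 + xneg n d)).[1] * B.[1] != 0 ->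
  wt n (v * A + u * ('X^(d.-1) * B) + j * ('X^(d.-1) * (1 + xneg n d) * B)) = n.
Proof.
move=> n_odd d_gt0 HBA HUV W1.
have -> : v * A + u * ('X^(d.-1) * B) + j * ('X^(d.-1) * (1 + xneg n d) * B) =
    v * A + ('X^(d.-1) * (u + j * (1 + xneg n d))) * B by ring.
have HVU := inC1_of_inC1' (odd_gt0 n_odd) d_gt0 HUV.
apply: wt_kernel_mul_1DX (odd_gt0 n_odd) _ n_odd (inC1_pairing_mul_1DX HVU HBA) _.
by rewrite hornerD !hornerM hornerXn expr1n mul1r.
Qed.

Lemma F2_nz_choice (x y a b : 'F_2) : a + b = 1 -> x != 0 \/ y != 0 ->
  x * a + y * b != 0 \/ x * b + y * a != 0.
Proof.
by case: (F2_cases x) => ->; case: (F2_cases y) => ->;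
  case: (F2_cases a) => ->; case: (F2_cases b) => ->; rewrite ?eqxx; auto.
Qed.

Section RLCode.
Variable s : nat.
Hypothesis s_gt0 : (0 < s)%N.
Local Notation d := s.*2.+1.
Local Notation n := (s.+1 + s * d)%N.

Lemma n_odd : odd n.
Proof. by rewrite oddD oddM /= odd_double andbT; case: (odd s). Qed.

Lemma dual_pair_s : inC1 n d (geom ('X^d) s.+1) (geom 'X s).
Proof.
rewrite /inC1 /eqR subr0 !geom_mul_1D ?pchar2_polyF2 //.
rewrite addrACA [1 + 1]addF2 add0r -exprM -subF2.
by rewrite (_ : (d * s.+1 = s + 1 * n)%N) ?dvdp_modpoly_Xn //; lia.
Qed.

Lemma dual_pair_sS : inC1 n d ('X^(s.+1) * geom ('X^d) s) (geom 'X s.+1).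
Proof.
rewrite /inC1 /eqR subr0 -mulrA !geom_mul_1D ?pchar2_polyF2 //.
rewrite mulrDr mulr1 -exprM -exprD (_ : (s.+1 + d * s = n)%N); last by lia.
rewrite (_ : _ + _ = modpoly n + ('X^(s.+1) + 'X^(s.+1)) + (1 + 1)).
  by rewrite !addF2 !addr0 dvdpp.
by rewrite /modpoly; ring.
Qed.

Lemma exists_dual_pair (x y : 'F_2) : x != 0 \/ y != 0 ->
  exists A B, [/\ inC1 n d B A, x * A.[1] + y * B.[1] != 0,
    (wt n A <= s.+1)%N, (wt n B <= s.+1)%N & (wt n (A * (1 + 'X)) <= 2)%N].
Proof.
move=> xy; have n_gt0 := odd_gt0 n_odd.
have ab1 : (s.+1)%:R + s%:R = 1 :> 'F_2.
  by rewrite -natrD F2_natr_odd addSn addnn /= odd_double.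
have wAX k : (wt n (geom 'X k * (1 + 'X)) <= 2)%N.
  by rewrite geom_mul_1D ?pchar2_polyF2 ?wt_1DXn.
have [H|H] := F2_nz_choice ab1 xy.
- exists (geom 'X s.+1), ('X^(s.+1) * geom ('X^d) s); split => //.
  + exact: dual_pair_sS.
  + rewrite hornerM hornerXn expr1n mul1r.
    by rewrite !horner1_geom ?hornerX ?hornerXn ?expr1n.
  + exact: (wt_geom n_gt0 1).
  + apply: leq_trans (wt_XnM n_gt0 _ _) _.
    exact: leq_trans (wt_geom n_gt0 _ _) (leqnSn s).
- exists (geom 'X s), (geom ('X^d) s.+1); split => //.
  + exact: dual_pair_s.
  + by rewrite !horner1_geom ?hornerX ?hornerXn ?expr1n.
  + exact: leq_trans (wt_geom n_gt0 1 _) (leqnSn s).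
  + exact: wt_geom n_gt0 _ _.
Qed.

Lemma full_weight_bound (x y z P Q R : {poly 'F_2}) :
  wt n (x * P + y * Q + z * R) = n ->
  (wt n P <= s.+1)%N -> (wt n Q <= s.+1)%N -> (wt n R <= s.+1)%N ->
  (d <= wt n x + wt n y + wt n z)%N.
Proof.
move=> Hn wP wQ wR; have n_gt0 := odd_gt0 n_odd.
have wM a b : (wt n b <= s.+1)%N -> (wt n (a * b) <= s.+1 * wt n a)%N.
  move=> wb; apply: leq_trans (wtM n_gt0 _ _) _.
  by rewrite mulnC leq_mul2r wb orbT.
have : (n <= s.+1 * (wt n x + wt n y + wt n z))%N.
  rewrite -{1}Hn !mulnDr; apply: leq_trans (wtD n_gt0 _ _) (leq_add _ (wM _ _ wR)).
  exact: leq_trans (wtD n_gt0 _ _) (leq_add (wM _ _ wP) (wM _ _ wQ)).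
nia.
Qed.

Lemma fault_cost_lower_bound (j u v : {poly 'F_2}) :
  bad_fault n d j u v -> (d <= fault_cost n j u v)%N.
Proof.
have n_gt0 := odd_gt0 n_odd; have s1_ge2 : (2 <= s.+1)%N := s_gt0.
rewrite /fault_cost => -[HX|HZ].
- have [A [B [HBA HW1 wA wB wAX]]] := exists_dual_pair (X_logical_parity n_odd HX).
  have HW := wt_X_fault_pairing n_odd HBA HX.1 HW1.
  by have := full_weight_bound HW wA wB (leq_trans wAX s1_ge2); lia.
- have [A [B [HBA HW1 wA wB wAX]]] := exists_dual_pair (Z_logical_parity n_odd HZ).
  have HW := wt_Z_fault_pairing n_odd (ltn0Sn _) HBA HZ.1 HW1.
  have wR : (wt n ('X^(d.-1) * (1 + xneg n d) * B) <= s.+1)%N.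
    rewrite (wt_eqR (eqR_Z_hook n_gt0 (ltn0Sn _) HBA)).
    exact: leq_trans (wt_XnM n_gt0 _ _) (leq_trans wAX s1_ge2).
  by have := full_weight_bound HW wA (leq_trans (wt_XnM n_gt0 _ _) wB) wR; lia.
Qed.

Lemma example_bad_fault : bad_fault n d 0 (geom ('X^d) s.+1) (geom 'X s).
Proof.
left; rewrite mul0r addr0; split; first exact: dual_pair_s.
case=> c [/eqR_horner1 + /eqR_horner1].
rewrite !hornerM !horner1_geom ?hornerX ?hornerXn ?expr1n // horner1_1DXn.
rewrite hornerD hornerC hornerX (addrr_pchar2 pchar2_F2) !mulr0 mulrS => Hs1 Hs.
by move: Hs1; rewrite Hs addr0; apply/eqP; rewrite oner_eq0.
Qed.

Lemma effective_distance_RL : effective_distance_is n d d.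
Proof.
have n_gt0 := odd_gt0 n_odd.
split=> [|j u v]; last exact: fault_cost_lower_bound.
exists 0, (geom ('X^d) s.+1), (geom 'X s); split; first exact: example_bad_fault.
apply/eqP; rewrite eqn_leq (fault_cost_lower_bound example_bad_fault) andbT.
rewrite /fault_cost wt0 add0n.
have wv : (wt n (geom 'X s) <= s)%N := wt_geom n_gt0 1 s.
by have := wt_geom n_gt0 d s.+1; lia.
Qed.

End RLCode.

Theorem theorem7 (d : nat) :
  odd d -> (3 <= d)%N ->
  effective_distance_is ((d ^ 2 + 1)./2) d d.
Proof.
move=> d_odd d_ge3; set s := d./2.
have d_eq : d = s.*2.+1 by rewrite -[LHS]odd_double_half d_odd.
have s_gt0 : (0 < s)%N by move: d_ge3; rewrite d_eq; lia.
have -> : (d ^ 2 + 1)./2 = (s.+1 + s * s.*2.+1)%N.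
  by rewrite -[RHS]doubleK; congr (_./2); rewrite d_eq; lia.
by rewrite d_eq; apply: effective_distance_RL.
Qed.
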